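(* Let $\mathbb{K}$ be a field, and let $\mathfrak{g}$ be one of $\mathfrak{so}_{2m+1}$, $\mathfrak{sp}_{2m}$ or $\mathfrak{so}_{2m}$, where $\mathrm{char}(\mathbb{K})\neq 2$ in the case $\mathfrak{g}=\mathfrak{so}_{2m+1}$. Let $\mathbf{U}_1=\mathbf{U}_1(\mathfrak{g})$, let $V$ be its vector representation, and for $d\in\mathbb{Z}_{\geq 0}$ set $T^d=V^{\otimes d}$. If $T^d$ is a non-semisimple $\mathbf{U}_1$-module, then $T^{d+2}$ is a non-semisimple $\mathbf{U}_1$-module.
   Context: $\mathbf{U}_1(\mathfrak{g})$ is the (Lusztig) quantized enveloping algebra of $\mathfrak{g}$ specialized at $q=1$ over $\mathbb{K}$; modules are finite-dimensional of type $1$ and tensor products carry the usual Hopf algebra action. The vector representation has dimension $2m+1$ for $\mathfrak{so}_{2m+1}$ and $2m$ otherwise. *)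

From HB Require Import structures.
From mathcomp Require Import all_boot all_order all_algebra.
Set Implicit Arguments. Unset Strict Implicit. Unset Printing Implicit Defensive.
Import Order.TTheory GRing.Theory Num.Theory.
Local Open Scope ring_scope.

(* The three classical types: so_{2m+1} (B), sp_{2m} (C), so_{2m} (D). *)
Inductive cls := TB | TC | TD.

Definition valid_rank (c : cls) (m : nat) : bool :=
  match c with TD => (1 < m)%N | _ => (0 < m)%N end.

Definition vdim (c : cls) (m : nat) : nat :=
  if c is TB then (m.*2).+1 else m.*2.

Definition bz (b : bool) : int := (b : nat)%:Z.

(* Integral (admissible lattice) matrices of the Chevalley generators E_i, F_i
   (i = 0..m-1 for the simple roots alpha_1..alpha_m, alpha_m being the
   special root) on the vector representation, w.r.t. a weight basis
   w_0..w_(N-1) with weights eps_1,..,eps_m,(0),-eps_m,..,-eps_1.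
   Column convention: [X a b] = coefficient of w_a in X(w_b).            *)
Definition Ecoef (c : cls) (m i a b : nat) : int :=
  let N := vdim c m in
  if (i.+1 < m)%N then bz ((a == i) && (b == i.+1)) - bz ((a == (N - 2 - i)%N) && (b == (N - 1 - i)%N))
  else match c with
  | TB => 2 * bz ((a == (m - 1)%N) && (b == m)) + bz ((a == m) && (b == m.+1))
  | TC => bz ((a == (m - 1)%N) && (b == m))
  | TD => bz ((a == (m - 2)%N) && (b == m)) - bz ((a == (m - 1)%N) && (b == m.+1))
  end.

Definition Fcoef (c : cls) (m i a b : nat) : int :=
  if (i.+1 < m)%N then Ecoef c m i b a
  else match c with
  | TB => bz ((a == m) && (b == (m - 1)%N)) + 2 * bz ((a == m.+1) && (b == m))
  | _ => Ecoef c m i b a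
  end.

Fixpoint mpow (N : nat) (X : nat -> nat -> int) (n : nat) (a b : nat) : int :=
  match n with
  | 0 => bz (a == b)
  | n'.+1 => \sum_(k < N) X a k * mpow N X n' k b
  end.

Definition dpow (N : nat) (X : nat -> nat -> int) (n a b : nat) : int :=
  (mpow N X n a b %/ (n`!)%:Z)%Z.

Definition gbin (h : int) (t : nat) : int :=
  ((\prod_(j < t) (h - j%:Z)) %/ (t`!)%:Z)%Z.

(* Value <alpha_i^vee, wt(w_u)>, i.e. the diagonal entry of H_i = [E_i, F_i]. *)
Definition hcoef (c : cls) (m i u : nat) : int :=
  \sum_(w < vdim c m) (Ecoef c m i u w * Fcoef c m i w u - Fcoef c m i u w * Ecoef c m i w u).

(* Basis of T^d = V^{(x) d}: tensors w_{s 0} (x) ... (x) w_{s (d-1)}. *)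
Definition tidx (c : cls) (m d : nat) := {ffun 'I_d -> 'I_(vdim c m)}.

Definition Tpow (K : fieldType) (c : cls) (m d : nat) := {ffun tidx c m d -> K^o}.

(* Action of Delta^{(d)}(X^{(n)}) = sum_{a_1+..+a_d = n} X^{(a_1)} (x) .. (x) X^{(a_d)}
   (the K_i act trivially on type-1 modules at q = 1). *)
Definition opT (K : fieldType) (c : cls) (m d : nat) (X : nat -> nat -> int) (n : nat)
  (s t : tidx c m d) : K :=
  (\sum_(a : {ffun 'I_d -> 'I_n.+1} | (\sum_(k < d) (a k : nat))%N == n)
     \prod_(k < d) dpow (vdim c m) X (a k) (s k) (t k))%:~R.

(* Action of the Cartan element [K_i; 0, t] : on a weight vector of weight
   lambda it acts by binom(<alpha_i^vee, lambda>, t). *)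
Definition opK (K : fieldType) (c : cls) (m d i t : nat) (s s' : tidx c m d) : K :=
  if s == s' then (gbin (\sum_(k < d) hcoef c m i (s k)) t)%:~R else 0.

Definition applyOp (K : fieldType) (c : cls) (m d : nat)
  (Op : tidx c m d -> tidx c m d -> K) (f : Tpow K c m d) : Tpow K c m d :=
  [ffun s => \sum_t Op s t * f t].

Definition stableOp (K : fieldType) (c : cls) (m d : nat)
  (U : {vspace Tpow K c m d}) (Op : tidx c m d -> tidx c m d -> K) : Prop :=
  forall f, f \in U -> applyOp Op f \in U.

(* U is a U_1(g)-submodule of T^d: stable under all generators
   E_i^{(n)}, F_i^{(n)}, [K_i; 0, n] of Lusztig's form at q = 1. *)
Definition is_submodule (K : fieldType) (c : cls) (m d : nat)
  (U : {vspace Tpow K c m d}) : Prop :=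
  forall (i : 'I_m) (n : nat),
    [/\ stableOp U (@opT K c m d (Ecoef c m i) n),
        stableOp U (@opT K c m d (Fcoef c m i) n)
      & stableOp U (@opK K c m d i n)].

Definition Tpow_semisimple (K : fieldType) (c : cls) (m d : nat) : Prop :=
  forall U : {vspace Tpow K c m d}, is_submodule U ->
    exists W : {vspace Tpow K c m d},
      [/\ is_submodule W, (U + W)%VS = fullv & (U :&: W)%VS = 0%VS].

From HB Require Import structures.
From mathcomp Require Import all_boot all_order all_algebra.
From mathcomp Require Import zify ring.
Import GRing.Theory.
Local Open Scope ring_scope.

(* The vector representation V (basis w_0, ..., w_(N-1)) carries the
   nondegenerate bilinear form B(w_a, w_b) = s_a [b = N-1-a] for which every
   Chevalley generator X is skew-adjoint; moreover X^3 = 0 and X^2 has even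
   entries, so the divided powers X^(n) are integral and X^(n) is adjoint to
   (-1)^n X^(n).  For Omega = sum_a s_a w_a (x) w_(N-1-a) this gives
   (X^(i) (x) X^(r-i)) Omega = (-1)^i binom(r, i) (1 (x) X^(r)) Omega, and the
   alternating sum over i vanishes for r > 0; Omega also has weight 0.  Hence
   g |-> g (x) Omega is a module map T^d -> T^(d+2).  It is injective in every
   characteristic, since some s_a is a sign, and the preimage of a complement of the image of a submodule U is a
   complement of U. *)

Set Implicit Arguments. Unset Strict Implicit.

Record skew_nilpotent (N : nat) (s : nat -> int) (X : nat -> nat -> int) := SkewNilpotent {
  mul3_entries0 : forall a k l b, X a k * X k l * X l b = 0;
  dvd2_mul2_entries : forall a k b, (2 %| X a k * X k b)%Z;
  skew_adjoint : forall a b, (a < N)%N -> (b < N)%N ->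
    X a b * s b = - (s a * X (N - 1 - b)%N (N - 1 - a)%N) }.

Lemma sum_mul_delta N (F : nat -> int) y : (y < N)%N ->
  \sum_(k < N) F k * bz ((k : nat) == y) = F y.
Proof.
move=> hy; rewrite (bigD1 (Ordinal hy)) //= eqxx mulr1 big1 ?addr0 // => k hk.
by case: eqP => [e|]; [case/eqP: hk; apply: val_inj | rewrite mulr0].
Qed.

Lemma sum_mirror N (F : nat -> int) :
  \sum_(k < N) F k = \sum_(k < N) F (N - 1 - k)%N.
Proof.
rewrite (reindex_inj rev_ord_inj) /=; apply: eq_bigr => k _.
by congr F; lia.
Qed.

Lemma sum_alt_binomial r : \sum_(i < r.+1) (-1) ^+ i * ('C(r, i))%:Z = bz (r == 0%N).
Proof.
have := exprDn (1 : int) (-1) r; rewrite subrr expr0n => e.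
transitivity ((r == 0%N)%:R : int); last by case: (r == 0%N).
rewrite e; apply: eq_bigr => i _.
by rewrite expr1n mul1r -mulr_natr natz.
Qed.

Lemma natz_fact_neq0 n : ((n`!)%:Z : int) != 0.
Proof. by rewrite -lt0n fact_gt0. Qed.

Definition omega N (s : nat -> int) (p q : nat) : int := s p * bz (q == (N - 1 - p)%N).

Section MatrixPowers.

Variables (N : nat) (X : nat -> nat -> int).

Lemma mpow1 x y : mpow N X 1 x y = if (y < N)%N then X x y else 0.
Proof.
rewrite /=; case: ltnP => hy; first by rewrite sum_mul_delta.
rewrite big1 // => k _; case: eqP => [e|]; last by rewrite mulr0.
by have := ltn_ord k; rewrite e; lia.
Qed.

Lemma mpowD a b x y : (x < N)%N ->
  mpow N X (a + b) x y = \sum_(k < N) mpow N X a x k * mpow N X b k y.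
Proof.
elim: a x => [|a IH] x hx.
  rewrite add0n -(sum_mul_delta (fun k => mpow N X b k y) hx).
  by apply: eq_bigr => k _; rewrite mulrC eq_sym.
rewrite addSn /=.
under eq_bigr do rewrite IH // mulr_sumr.
rewrite exchange_big /=; apply: eq_bigr => k _.
by rewrite mulr_suml; apply: eq_bigr => l _; rewrite mulrA.
Qed.

Variable s : nat -> int.
Hypothesis hX : skew_nilpotent N s X.

Lemma mpow_ge3 n x y : (3 <= n)%N -> mpow N X n x y = 0.
Proof.
elim: n x => [|n IH] x //; rewrite leq_eqVlt => /orP [/eqP <-|h].
  rewrite /= big1 // => k _; rewrite mulr_sumr big1 // => l _.
  rewrite -/(mpow N X 1 l y) mpow1; case: ifP => _; last by rewrite !mulr0.
  by rewrite mulrA (mul3_entries0 hX).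
by rewrite /= big1 // => k _; rewrite IH // mulr0.
Qed.

Lemma dvdz_fact_mpow n x y : ((n`!)%:Z %| mpow N X n x y)%Z.
Proof.
case: n => [|[|[|n]]]; try by rewrite dvd1z.
- apply: rpred_sum => k _; rewrite -/(mpow N X 1 k y) mpow1.
  by case: ifP => _; [exact: (dvd2_mul2_entries hX) | rewrite mulr0].
- by rewrite mpow_ge3 // dvdz0.
Qed.

Lemma mpow_dpow n x y : mpow N X n x y = (n`!)%:Z * dpow N X n x y.
Proof. by rewrite /dpow mulrC divzK // dvdz_fact_mpow. Qed.

Lemma mpow_skew_adjoint n x y : (x < N)%N -> (y < N)%N ->
  mpow N X n x y * s y = (-1) ^+ n * s x * mpow N X n (N - 1 - y)%N (N - 1 - x)%N.
Proof.
elim: n x => [|n IH] x hx hy.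
  rewrite /= expr0 mul1r.
  case: (x =P y) => [<-|ne]; first by rewrite eqxx mul1r mulr1.
  case: (_ =P _) => [e|]; last by rewrite !mulr0 mul0r.
  by exfalso; apply: ne; lia.
have hy' : (N - 1 - y < N)%N by lia.
rewrite -[in X in _ = _ * X]addn1 (mpowD _ _ _ hy') /= mulr_suml mulr_sumr.
rewrite (sum_mirror N (fun k => (-1) ^+ n.+1 * s x *
  (mpow N X n (N - 1 - y) k * mpow N X 1 k (N - 1 - x)))).
apply: eq_bigr => k _.
have hx' : (N - 1 - x < N)%N by lia.
rewrite -mulrA IH // mpow1 hx'.
transitivity ((-1) ^+ n * mpow N X n (N - 1 - y)%N (N - 1 - k)%N * (X x k * s k)); first ring.
rewrite (skew_adjoint hX hx (ltn_ord k)) exprS; ring.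
Qed.

Lemma dpow_skew_adjoint n x y : (x < N)%N -> (y < N)%N ->
  dpow N X n x y * s y = (-1) ^+ n * s x * dpow N X n (N - 1 - y)%N (N - 1 - x)%N.
Proof.
move=> hx hy; apply: (mulfI (natz_fact_neq0 n)).
rewrite mulrA -mpow_dpow (mpow_skew_adjoint _ hx hy) mpow_dpow; ring.
Qed.

Lemma dpowD a b x y : (x < N)%N ->
  \sum_(k < N) dpow N X a x k * dpow N X b k y = ('C(a + b, a))%:Z * dpow N X (a + b) x y.
Proof.
move=> hx; apply: (mulfI (natz_fact_neq0 a)); apply: (mulfI (natz_fact_neq0 b)).
rewrite !mulr_sumr.
transitivity (\sum_(k < N) mpow N X a x k * mpow N X b k y).
  by apply: eq_bigr => k _; rewrite !mpow_dpow; ring.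
rewrite -mpowD // mpow_dpow -(bin_fact (leq_addr b a)) addKn !PoszM; ring.
Qed.

Lemma dpow_omega r x y : (x < N)%N -> (y < N)%N ->
  \sum_(i < r.+1) \sum_(p < N) \sum_(q < N)
     dpow N X i x p * dpow N X (r - i) y q * omega N s p q = bz (r == 0%N) * omega N s x y.
Proof.
move=> hx hy.
have hx' : (N - 1 - x < N)%N by lia.
transitivity (\sum_(i < r.+1) (-1) ^+ i * ('C(r, i))%:Z * (s x * dpow N X r y (N - 1 - x)%N)).
  apply: eq_bigr => i _.
  have hir : (i <= r)%N by rewrite -ltnS.
  transitivity (\sum_(p < N) dpow N X i x p * s p * dpow N X (r - i) y (N - 1 - p)%N).
    apply: eq_bigr => p _.
    have hp' : (N - 1 - p < N)%N by lia.
    rewrite -(sum_mul_delta (fun q => dpow N X i x p * s p * dpow N X (r - i) y q) hp').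
    by apply: eq_bigr => q _; rewrite /omega; ring.
  transitivity (\sum_(p < N) (-1) ^+ i * s x *
      (dpow N X (r - i) y (N - 1 - p)%N * dpow N X i (N - 1 - p)%N (N - 1 - x)%N)).
    by apply: eq_bigr => p _; rewrite (dpow_skew_adjoint _ hx (ltn_ord p)); ring.
  rewrite -big_distrr /= -(sum_mirror N (fun k => dpow N X (r - i) y k * dpow N X i k (N - 1 - x)%N)).
  rewrite (dpowD _ _ _ hy) subnK // bin_sub //; ring.
rewrite -big_distrl /= sum_alt_binomial /omega.
case: (r =P 0%N) => [->|_] /=; last by rewrite !mul0r.
by rewrite /dpow /= divz1; ring.
Qed.

End MatrixPowers.

Lemma commutator_diag_mirror N s E F u : skew_nilpotent N s E -> skew_nilpotent N s F ->
  (forall v, s v != 0) -> (u < N)%N ->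
  \sum_(w < N) (E u w * F w u - F u w * E w u) =
  - \sum_(w < N) (E (N - 1 - u)%N w * F w (N - 1 - u)%N - F (N - 1 - u)%N w * E w (N - 1 - u)%N).
Proof.
move=> hE hF s_neq0 hu.
have swap (A B : nat -> nat -> int) w : skew_nilpotent N s A -> skew_nilpotent N s B -> (w < N)%N ->
    A u w * B w u = B (N - 1 - u)%N (N - 1 - w)%N * A (N - 1 - w)%N (N - 1 - u)%N.
  move=> hA hB hw; apply: (mulIf (mulf_neq0 (s_neq0 w) (s_neq0 u))).
  transitivity ((A u w * s w) * (B w u * s u)); first ring.
  rewrite (skew_adjoint hA hu hw) (skew_adjoint hB hw hu); ring.
rewrite (sum_mirror N (fun w => E (N - 1 - u)%N w * F w (N - 1 - u)%N
  - F (N - 1 - u)%N w * E w (N - 1 - u)%N)).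
rewrite -sumrN; apply: eq_bigr => w _.
rewrite (swap _ _ _ hE hF (ltn_ord w)) (swap _ _ _ hF hE (ltn_ord w)); ring.
Qed.

Definition munit (p q a b : nat) : int := bz ((a == p) && (b == q)).

Lemma munit_mirror N p q a b : (a < N)%N -> (b < N)%N -> (p < N)%N -> (q < N)%N ->
  munit p q (N - 1 - b)%N (N - 1 - a)%N = munit (N - 1 - q)%N (N - 1 - p)%N a b.
Proof.
move=> ha hb hp hq; rewrite /munit andbC.
have E x y : (x < N)%N -> (y < N)%N -> (N - 1 - x == y)%N = (x == N - 1 - y)%N.
  by move=> hx hy; apply/eqP/eqP; lia.
by rewrite E // E.
Qed.

Lemma mulr_munitl (f : nat -> int) p q a b : f a * munit p q a b = f p * munit p q a b.
Proof. by rewrite /munit; case: (a =P p) => [->|] //= _; rewrite !mulr0. Qed.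

Lemma mulr_munitr (f : nat -> int) p q a b : f b * munit p q a b = f q * munit p q a b.
Proof.
by rewrite /munit; case: (a =P p) => //= _; case: (b =P q) => [->|] //=; rewrite !mulr0.
Qed.

Section TwoUnits.

Variables (N : nat) (s : nat -> int) (X : nat -> nat -> int).
Variables (p1 q1 p2 q2 : nat) (c1 c2 : int).
Hypothesis X_def : forall a b, X a b = c1 * munit p1 q1 a b + c2 * munit p2 q2 a b.
Hypothesis p1_neq_p2 : p1 <> p2.

Lemma two_units_support a b : X a b = 0 \/
  (a = p1 /\ b = q1 /\ X a b = c1) \/ (a = p2 /\ b = q2 /\ X a b = c2).
Proof.
rewrite X_def /munit.
case: (a =P p1) => h1; case: (b =P q1) => h2 /=;
case: (a =P p2) => h3; case: (b =P q2) => h4 /=;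
  rewrite ?mulr1 ?mulr0 ?addr0 ?add0r; try lia; auto.
Qed.

Lemma skew_nilpotent_two_units :
  (p1 < N)%N -> (q1 < N)%N -> (p2 < N)%N -> (q2 < N)%N ->
  (N - 1 - q1 = p2)%N -> (N - 1 - p1 = q2)%N ->
  c1 * s q1 = - (s p1 * c2) -> c2 * s q2 = - (s p2 * c1) ->
  q1 <> p1 -> q2 <> p2 -> ~ (q1 = p2 /\ q2 = p1) ->
  (q1 = p2 -> (2 %| c1 * c2)%Z) -> (q2 = p1 -> (2 %| c2 * c1)%Z) ->
  skew_nilpotent N s X.
Proof.
move=> h1 h2 h3 h4 m1 m2 e1 e2 n1 n2 no_cycle ev1 ev2; split.
- move=> a k l b.
  case: (two_units_support a k) => [->|A]; first by rewrite !mul0r.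
  case: (two_units_support k l) => [->|B]; first by rewrite mulr0 mul0r.
  case: (two_units_support l b) => [->|C]; first by rewrite mulr0.
  exfalso; case: A => [[? [? _]]|[? [? _]]]; case: B => [[? [? _]]|[? [? _]]];
    case: C => [[? [? _]]|[? [? _]]]; subst; auto.
- move=> a k b.
  case: (two_units_support a k) => [->|A]; first by rewrite !mul0r.
  case: (two_units_support k b) => [->|B]; first by rewrite mulr0.
  case: A => [[? [? ->]]|[? [? ->]]]; case: B => [[? [? ->]]|[? [? ->]]]; subst;
    by [exfalso; auto | auto].
- move=> a b ha hb.
  rewrite !X_def (munit_mirror ha hb h1 h2) (munit_mirror ha hb h3 h4).
  have m3 : (N - 1 - q2 = p1)%N by lia.
  have m4 : (N - 1 - p2 = q1)%N by lia.
  rewrite m1 m2 m3 m4 !mulrDl !mulrDr -!mulrA [_ * s b]mulrC [_ * s b]mulrC.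
  rewrite !mulr_munitr !mulrA [s a * _]mulrC [s a * _]mulrC -!mulrA !mulr_munitl !mulrA.
  rewrite e1 e2 [c2 * s p1]mulrC [c1 * s p2]mulrC.
  by rewrite !mulNr opprD addrC; congr (_ + _); rewrite mulrC -mulNr.
Qed.

End TwoUnits.

Lemma skew_nilpotent_one_unit N s X p q c :
  (forall a b, X a b = c * munit p q a b) -> (p < N)%N -> (q < N)%N ->
  (N - 1 - q = p)%N -> c * s q = - (s p * c) -> q <> p ->
  skew_nilpotent N s X.
Proof.
move=> X_def hp hq mpq e n.
have mqp : (N - 1 - p = q)%N by lia.
have X2 a k b : X a k * X k b = 0.
  rewrite !X_def /munit; case: (k =P q) => [->|]; last by rewrite andbF mulr0 mul0r.
  by case: (q =P p) => //=; rewrite !mulr0.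
split.
- by move=> a k l b; rewrite X2 mul0r.
- by move=> a k b; rewrite X2.
- move=> a b ha hb; rewrite !X_def (munit_mirror ha hb hp hq) mpq mqp /munit.
  case: (a =P p) => [->|] /=; last by rewrite !mulr0 mul0r oppr0.
  case: (b =P q) => [->|] /=; last by rewrite !mulr0 mul0r oppr0.
  by rewrite !mulr1 e.
Qed.

(* In type B the middle coefficient is -1/2 times the others, matching the
   entries 2 of E_m and F_m. *)
Definition omega_coef (c : cls) (m u : nat) : int :=
  match c with
  | TB => if u == m then -1 else 2
  | TC => if (u < m)%N then 1 else -1
  | TD => 1
  end.

Lemma omega_coef_neq0 c m u : omega_coef c m u != 0.
Proof. by case: c; rewrite /omega_coef //; case: ifP. Qed.

Lemma omega_coef_sqr1 c m : valid_rank c m ->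
  exists x0 : 'I_(vdim c m), omega_coef c m x0 ^+ 2 = 1.
Proof.
case: c => /= hv.
- have hx0 : (m < m.*2.+1)%N by lia.
  by exists (Ordinal hx0); rewrite /omega_coef /= eqxx.
- have hx0 : (0 < m.*2)%N by lia.
  by exists (Ordinal hx0); rewrite /omega_coef /= hv.
- have hx0 : (0 < m.*2)%N by lia.
  by exists (Ordinal hx0).
Qed.

Ltac sign_arith := rewrite /omega_coef /=;
  repeat (first [case: eqP => ? /= | case: ltnP => ? /=]); lia.

Lemma skew_nilpotent_Ecoef c m (i : 'I_m) : valid_rank c m ->
  skew_nilpotent (vdim c m) (omega_coef c m) (Ecoef c m i).
Proof.
case: i => i hi /= hv; case h: (i.+1 < m)%N.
{ apply: (@skew_nilpotent_two_units _ _ _ i i.+1 (vdim c m - 2 - i)%N (vdim c m - 1 - i)%N 1 (-1)).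
  1: by move=> a b; rewrite /Ecoef h mul1r mulN1r.
  all: case: c hv => /= hv; try sign_arith.
  all: move=> *; lia. }
case: c hv => /= hv.
{ apply: (@skew_nilpotent_two_units _ _ _ m.-1 m m m.+1 2 1).
  1: by move=> a b; rewrite /Ecoef h /munit ?subn1 mul1r.
  all: try sign_arith.
  all: try (move=> *; lia).
  all: by move=> _; apply/dvdzP; exists 1. }
{ apply: (@skew_nilpotent_one_unit _ _ _ m.-1 m 1).
  1: by move=> a b; rewrite /Ecoef h /munit ?subn1 mul1r.
  all: sign_arith. }
{ apply: (@skew_nilpotent_two_units _ _ _ m.-2 m m.-1 m.+1 1 (-1)).
  1: by move=> a b; rewrite /Ecoef h /munit ?subn2 ?subn1 mul1r mulN1r.
  all: try sign_arith.
  all: move=> *; lia. }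
Qed.

Lemma skew_nilpotent_Fcoef c m (i : 'I_m) : valid_rank c m ->
  skew_nilpotent (vdim c m) (omega_coef c m) (Fcoef c m i).
Proof.
case: i => i hi /= hv; case h: (i.+1 < m)%N.
{ apply: (@skew_nilpotent_two_units _ _ _ i.+1 i (vdim c m - 1 - i)%N (vdim c m - 2 - i)%N 1 (-1)).
  1: move=> a b; rewrite /Fcoef /Ecoef h mul1r mulN1r /munit.
  1: by rewrite [(a == _) && _]andbC [(a == (_ - _)%N) && _]andbC.
  all: case: c hv => /= hv; try sign_arith.
  all: move=> *; lia. }
case: c hv => /= hv.
{ apply: (@skew_nilpotent_two_units _ _ _ m m.-1 m.+1 m 1 2).
  1: by move=> a b; rewrite /Fcoef h /munit ?subn1 mul1r.
  all: try sign_arith.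
  all: try (move=> *; lia).
  all: by move=> _; apply/dvdzP; exists 1. }
{ apply: (@skew_nilpotent_one_unit _ _ _ m m.-1 1).
  1: by move=> a b; rewrite /Fcoef /Ecoef h /munit ?subn1 mul1r andbC.
  all: sign_arith. }
{ apply: (@skew_nilpotent_two_units _ _ _ m m.-2 m.+1 m.-1 1 (-1)).
  1: move=> a b; rewrite /Fcoef /Ecoef h /munit ?subn2 ?subn1 mul1r mulN1r.
  1: by rewrite [(a == _) && _]andbC [(a == m.+1) && _]andbC.
  all: try sign_arith.
  all: move=> *; lia. }
Qed.

Lemma hcoef_mirror c m (i : 'I_m) u : valid_rank c m -> (u < vdim c m)%N ->
  hcoef c m i u + hcoef c m i (vdim c m - 1 - u)%N = 0.
Proof.
move=> hv hu; rewrite /hcoef.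
rewrite (commutator_diag_mirror (skew_nilpotent_Ecoef i hv) (skew_nilpotent_Fcoef i hv)
  (@omega_coef_neq0 c m) hu).
exact: addNr.
Qed.

Definition coprod_coef N X d n (S T : 'I_d -> nat) : int :=
  \sum_(a : {ffun 'I_d -> 'I_n.+1} | (\sum_(k < d) (a k : nat) == n)%N)
     \prod_(k < d) dpow N X (a k) (S k) (T k).

Definition dpow_series N X M x y : {poly int} := \sum_(j < M) dpow N X j x y *: 'X^j.

Lemma coef_dpow_series N X M x y i :
  (dpow_series N X M x y)`_i = if (i < M)%N then dpow N X i x y else 0.
Proof.
rewrite coef_sumMXn; case: ltnP => hi; first by rewrite (big_pred1 (Ordinal hi)).
by rewrite big1 // => j /eqP e; have := ltn_ord j; rewrite e; lia.
Qed.

Lemma coef_prod_eq_low I (r : seq I) (P Q : I -> {poly int}) j :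
  (forall k i, (i <= j)%N -> (P k)`_i = (Q k)`_i) ->
  forall i, (i <= j)%N -> (\prod_(k <- r) P k)`_i = (\prod_(k <- r) Q k)`_i.
Proof.
move=> PQ.
apply: (big_ind2 (fun p q : {poly int} => forall i, (i <= j)%N -> p`_i = q`_i)) => //;
  last by move=> k _; apply: PQ.
move=> p1 q1 p2 q2 e1 e2 i hi; rewrite !coefM; apply: eq_bigr => l _.
have hl : (l <= j)%N by have := ltn_ord l; lia.
by rewrite e1 // e2 //; lia.
Qed.

Lemma coprod_coefE N X d n S T :
  coprod_coef N X n S T = (\prod_(k < d) dpow_series N X n.+1 (S k) (T k))`_n.
Proof.
rewrite /dpow_series bigA_distr_bigA /=.
under eq_bigr do rewrite scaler_prod prodrXr.
by rewrite coef_sumMXn.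
Qed.

Lemma coprod_coef_low N X d n l S T : (l <= n)%N ->
  (\prod_(k < d) dpow_series N X n.+1 (S k) (T k))`_l = coprod_coef N X l S T.
Proof.
move=> hl; rewrite coprod_coefE; apply: (@coef_prod_eq_low _ _ _ _ l) => // k i hi.
rewrite !coef_dpow_series; have -> : (i < n.+1)%N by lia.
by have -> : (i < l.+1)%N by lia.
Qed.

Definition ord_lift2 d (k : 'I_d) : 'I_d.+2 :=
  widen_ord (leqnSn d.+1) (widen_ord (leqnSn d) k).
Definition ord_penult d : 'I_d.+2 := widen_ord (leqnSn d.+1) ord_max.

Lemma coprod_coef_split2 N X d n (S T : 'I_d.+2 -> nat) :
  coprod_coef N X n S T =
  \sum_(l < n.+1) coprod_coef N X l (S \o @ord_lift2 d) (T \o @ord_lift2 d) *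
     \sum_(i < (n - l).+1) dpow N X i (S (ord_penult d)) (T (ord_penult d)) *
                          dpow N X (n - l - i) (S ord_max) (T ord_max).
Proof.
rewrite coprod_coefE big_ord_recr big_ord_recr /= -mulrA coefM; apply: eq_bigr => l _.
have hl : (l <= n)%N by have := ltn_ord l; lia.
rewrite (coprod_coef_low _ _ _ _ hl) coefM; congr (_ * _); apply: eq_bigr => i _.
have hi : (i <= n - l)%N by have := ltn_ord i; lia.
rewrite !coef_dpow_series; have -> : (i < n.+1)%N by lia.
by have -> : (n - l - i < n.+1)%N by lia.
Qed.

Lemma coprod_coef_omega N s X n (C : nat -> int) x y :
  skew_nilpotent N s X -> (x < N)%N -> (y < N)%N ->
  \sum_(p < N) \sum_(q < N) (\sum_(l < n.+1) C l *
     \sum_(i < (n - l).+1) dpow N X i x p * dpow N X (n - l - i) y q) * omega N s p q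
  = C n * omega N s x y.
Proof.
move=> hX hx hy.
transitivity (\sum_(l < n.+1) C l * \sum_(i < (n - l).+1) \sum_(p < N) \sum_(q < N)
   dpow N X i x p * dpow N X (n - l - i) y q * omega N s p q).
  under eq_bigr => p _ do under eq_bigr => q _ do rewrite mulr_suml.
  under eq_bigr => p _ do rewrite exchange_big /=.
  rewrite exchange_big /=; apply: eq_bigr => l _.
  under eq_bigr => p _ do under eq_bigr => q _ do rewrite mulr_sumr mulr_suml.
  rewrite mulr_sumr; under [in RHS]eq_bigr => i _ do rewrite mulr_sumr.
  under [in RHS]eq_bigr => i _ do under eq_bigr => p _ do rewrite mulr_sumr.
  rewrite [in RHS]exchange_big /=; apply: eq_bigr => p _.
  rewrite [in RHS]exchange_big /=; apply: eq_bigr => q _.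
  by apply: eq_bigr => i _; ring.
(* Only the term l = n survives: Omega is invariant. *)
under eq_bigr => l _ do rewrite (dpow_omega hX _ hx hy).
rewrite big_ord_recr /= subnn eqxx mul1r big1 ?add0r // => l _.
by have := ltn_ord l; rewrite /bz; case: eqP => [|_]; [lia | rewrite mul0r mulr0].
Qed.

Lemma widen_ord_lift_max d (k : 'I_d) : widen_ord (leqnSn d) k = lift ord_max k.
Proof. by apply: val_inj; rewrite /= /bump leqNgt ltn_ord. Qed.

Section Snoc.

Variables (T : finType) (d : nat).

Definition finit (t : {ffun 'I_d.+1 -> T}) : {ffun 'I_d -> T} :=
  [ffun k => t (widen_ord (leqnSn d) k)].

Definition fsnoc (u : {ffun 'I_d -> T}) (p : T) : {ffun 'I_d.+1 -> T} :=
  [ffun k => if unlift ord_max k is Some k' then u k' else p].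

Lemma fsnoc_widen u p k : fsnoc u p (widen_ord (leqnSn d) k) = u k.
Proof. by rewrite ffunE widen_ord_lift_max liftK. Qed.

Lemma fsnoc_max u p : fsnoc u p ord_max = p.
Proof. by rewrite ffunE unlift_none. Qed.

Lemma finit_fsnoc u p : finit (fsnoc u p) = u.
Proof. by apply/ffunP => k; rewrite ffunE fsnoc_widen. Qed.

Lemma fsnoc_finit t : fsnoc (finit t) (t ord_max) = t.
Proof.
apply/ffunP => k; case: (unliftP ord_max k) => [j ->|->]; last by rewrite fsnoc_max.
by rewrite -widen_ord_lift_max fsnoc_widen ffunE.
Qed.

Lemma sum_fsnoc (V : nmodType) (F : {ffun 'I_d.+1 -> T} -> V) :
  \sum_t F t = \sum_u \sum_p F (fsnoc u p).
Proof.
rewrite pair_big (reindex (fun up => fsnoc up.1 up.2)) //=.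
exists (fun t => (finit t, t ord_max)) => [[u p] _|t _] /=.
  by rewrite finit_fsnoc fsnoc_max.
by rewrite fsnoc_finit.
Qed.

End Snoc.

Lemma fsnoc2_lift2 (T : finType) d (v : {ffun 'I_d -> T}) p q k :
  fsnoc (fsnoc v p) q (ord_lift2 k) = v k.
Proof. by rewrite /ord_lift2 !fsnoc_widen. Qed.

Lemma fsnoc2_penult (T : finType) d (v : {ffun 'I_d -> T}) p q :
  fsnoc (fsnoc v p) q (ord_penult d) = p.
Proof. by rewrite /ord_penult fsnoc_widen fsnoc_max. Qed.

Lemma finit2E (T : finType) d (t : {ffun 'I_d.+2 -> T}) k : finit (finit t) k = t (ord_lift2 k).
Proof. by rewrite !ffunE. Qed.

Lemma sum_fsnoc2 (V : nmodType) (T : finType) d (F : {ffun 'I_d.+2 -> T} -> V) :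
  \sum_t F t = \sum_v \sum_p \sum_q F (fsnoc (fsnoc v p) q).
Proof. by rewrite sum_fsnoc (sum_fsnoc (fun u => \sum_q F (fsnoc u q))). Qed.

Section ModuleMaps.

Variables (K : fieldType) (c : cls) (m d d' : nat).

Definition commute_op (f : Tpow K c m d -> Tpow K c m d')
    (Op' : tidx c m d' -> tidx c m d' -> K) (Op : tidx c m d -> tidx c m d -> K) :=
  forall g, applyOp Op' (f g) = f (applyOp Op g).

Definition module_map (f : Tpow K c m d -> Tpow K c m d') :=
  forall (i : 'I_m) n,
    [/\ commute_op f (@opT K c m d' (Ecoef c m i) n) (@opT K c m d (Ecoef c m i) n),
        commute_op f (@opT K c m d' (Fcoef c m i) n) (@opT K c m d (Fcoef c m i) n)
      & commute_op f (@opK K c m d' i n) (@opK K c m d i n)].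

Variable f : 'Hom(Tpow K c m d, Tpow K c m d').

Lemma stableOp_img U Op' Op :
  commute_op f Op' Op -> stableOp U Op -> stableOp (f @: U)%VS Op'.
Proof.
by move=> fOp sU _ /memv_imgP [u hu ->]; rewrite fOp; apply/memv_img/sU.
Qed.

Lemma stableOp_preim W Op' Op :
  commute_op f Op' Op -> stableOp W Op' -> stableOp (f @^-1: W)%VS Op.
Proof. by move=> fOp sW g; rewrite -!memv_preim -fOp; apply: sW. Qed.

Lemma is_submodule_img U : module_map f -> is_submodule U -> is_submodule (f @: U)%VS.
Proof.
move=> fM sU i n; have [fE fF fK] := fM i n; have [sE sF sK] := sU i n.
by split; apply: stableOp_img; eassumption.
Qed.

Lemma is_submodule_preim W : module_map f -> is_submodule W -> is_submodule (f @^-1: W)%VS.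
Proof.
move=> fM sW i n; have [fE fF fK] := fM i n; have [sE sF sK] := sW i n.
by split; apply: stableOp_preim; eassumption.
Qed.

Lemma Tpow_semisimple_embedding : lker f = 0%VS -> module_map f ->
  Tpow_semisimple K c m d' -> Tpow_semisimple K c m d.
Proof.
move=> f_inj fM ss U sU.
have [W [sW sumW capW]] := ss _ (is_submodule_img fM sU).
exists (f @^-1: W)%VS; split; first exact: is_submodule_preim.
- apply/vspaceP => x; rewrite memvf.
  have : f x \in (f @: U + W)%VS by rewrite sumW memvf.
  case/memv_addP => _ /memv_imgP [u hu ->] [w hw fx].
  apply/memv_addP; exists u => //; exists (x - u); last by rewrite addrC subrK.
  by rewrite -memv_preim linearB /= fx addrC addKr.
- apply/vspaceP => x; rewrite memv_cap memv0 -memv_preim.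
  apply/andP/eqP => [[hx hw]|->]; last by rewrite mem0v linear0 mem0v.
  apply/eqP; rewrite -memv0 -f_inj memv_ker -memv0 -capW memv_cap hw andbT.
  exact: memv_img.
Qed.

End ModuleMaps.

Definition tensor_omega (K : fieldType) (c : cls) (m d : nat) (g : Tpow K c m d) : Tpow K c m d.+2 :=
  [ffun t : tidx c m d.+2 => g (finit (finit t)) *
     (omega (vdim c m) (omega_coef c m) (t (ord_penult d)) (t ord_max))%:~R].

Lemma tensor_omegaE (K : fieldType) (c : cls) (m d : nat) (g : Tpow K c m d) t :
  tensor_omega g t =
  g (finit (finit t)) * (omega (vdim c m) (omega_coef c m) (t (ord_penult d)) (t ord_max))%:~R.
Proof. exact: ffunE. Qed.

Lemma tensor_omega_is_linear (K : fieldType) (c : cls) (m d : nat) : linear (@tensor_omega K c m d).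
Proof. by move=> a g h; apply/ffunP => t; rewrite !ffunE /= mulrDl -mulrA. Qed.

HB.instance Definition _ (K : fieldType) (c : cls) (m d : nat) :=
  GRing.isLinear.Build K (Tpow K c m d) (Tpow K c m d.+2) *:%R
    (@tensor_omega K c m d) (@tensor_omega_is_linear K c m d).

Lemma opTE (K : fieldType) (c : cls) (m d : nat) X n (s t : tidx c m d) :
  opT K X n s t = (coprod_coef (vdim c m) X n (fun k => s k) (fun k => t k))%:~R.
Proof. by []. Qed.

Section TensorOmega.

Variables (K : fieldType) (c : cls) (m d : nat).
Hypothesis hv : valid_rank c m.

Lemma tensor_omega_opT X n (g : Tpow K c m d) :
  skew_nilpotent (vdim c m) (omega_coef c m) X ->
  applyOp (@opT K c m d.+2 X n) (tensor_omega g) =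
  tensor_omega (applyOp (@opT K c m d X n) g).
Proof.
move=> hX; apply/ffunP => S; rewrite !ffunE sum_fsnoc2 mulr_suml.
set N := vdim c m; set x := S (ord_penult d); set y := S ord_max.
apply: eq_bigr => v _.
set C := fun l => coprod_coef N X l (S \o @ord_lift2 d) (fun k => v k).
have -> : opT K X n (finit (finit S)) v = (C n)%:~R.
  by rewrite opTE; congr _%:~R; apply: eq_bigr => a _; apply: eq_bigr => k _; rewrite finit2E.
rewrite [_ * g v]mulrC -mulrA -rmorphM /=.
rewrite -(coprod_coef_omega n C hX (ltn_ord x) (ltn_ord y)) rmorph_sum mulr_sumr.
apply: eq_bigr => p _; rewrite rmorph_sum mulr_sumr; apply: eq_bigr => q _.
rewrite opTE coprod_coef_split2 tensor_omegaE !finit_fsnoc fsnoc2_penult fsnoc_max.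
rewrite [in RHS]rmorphM /= mulrCA; congr (_ * (_%:~R * _)).
apply: eq_bigr => l _; congr (_ * _).
by apply: eq_bigr => a _; apply: eq_bigr => k _; rewrite /= fsnoc2_lift2.
Qed.

Lemma tensor_omega_opK (i : 'I_m) n (g : Tpow K c m d) :
  applyOp (@opK K c m d.+2 i n) (tensor_omega g) = tensor_omega (applyOp (@opK K c m d i n) g).
Proof.
apply/ffunP => S.
have sum_diag (T : finType) (t0 : T) (a : K) (f : T -> K) :
    \sum_t (if t0 == t then a else 0) * f t = a * f t0.
  rewrite (bigD1 t0) //= eqxx big1 ?addr0 // => t ht.
  by rewrite eq_sym (negbTE ht) mul0r.
rewrite !ffunE /opK !sum_diag !ffunE /omega.
case: eqP => [e|_]; last by rewrite !mulr0.
rewrite mulrA; congr (_%:~R * _ * _); congr gbin.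
rewrite !big_ord_recr /= -addrA e (hcoef_mirror i hv (ltn_ord _)) addr0.
by apply: eq_bigr => k _; rewrite !ffunE.
Qed.

Lemma tensor_omega_inj : injective (@tensor_omega K c m d).
Proof.
move=> g h e; have [x0 hx0] := omega_coef_sqr1 hv.
have s_neq0 : (omega_coef c m x0)%:~R != 0 :> K.
  apply/eqP => s0; have : (omega_coef c m x0 ^+ 2)%:~R = 1 :> K by rewrite hx0.
  by rewrite rmorphXn /= s0 expr0n => /eqP; rewrite eq_sym oner_eq0.
have hy : (vdim c m - 1 - x0 < vdim c m)%N by have := ltn_ord x0; lia.
apply/ffunP => v; apply: (mulIf s_neq0).
have := congr1 (fun G : Tpow K c m d.+2 => G (fsnoc (fsnoc v x0) (Ordinal hy))) e.
by rewrite /= !tensor_omegaE !finit_fsnoc fsnoc2_penult fsnoc_max /omega /= eqxx mulr1.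
Qed.

Lemma tensor_omega_module_map : module_map (linfun (@tensor_omega K c m d)).
Proof.
move=> i n; split=> g; rewrite !lfunE.
- exact: tensor_omega_opT (skew_nilpotent_Ecoef i hv).
- exact: tensor_omega_opT (skew_nilpotent_Fcoef i hv).
- exact: tensor_omega_opK.
Qed.

End TensorOmega.

Theorem proposition7p3 (K : fieldType) (c : cls) (m : nat)
  (hm : valid_rank c m)
  (hchar : c = TB -> (2 \notin [pchar K])%N)
  (d : nat) :
  ~ Tpow_semisimple K c m d -> ~ Tpow_semisimple K c m d.+2.
Proof.
move=> not_ss ss; apply: not_ss.
apply: (@Tpow_semisimple_embedding _ _ _ _ _ (linfun (@tensor_omega K c m d))) ss.
- by apply/eqP/lker0P => g h; rewrite !lfunE; exact: tensor_omega_inj.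
- exact: tensor_omega_module_map.
Qed.
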